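(* Consider the decentralized Thompson Sampling algorithm for Bernoulli rewards described in the context, with learning rate $\eta>0$ and prior $\mathrm{Beta}(1,1)$. Then for every round $t\ge1$, agent $i\in[N]$ and arm $k\in[K]$, the distribution $Q^{(i)}_{k,t}$ (with density $q^{(i)}_{k,t}$) from which $\theta^{(i)}_k(t)$ is sampled is $\mathrm{Beta}(\alpha^{(i)}_k(t),\beta^{(i)}_k(t))$, where \[ \alpha^{(i)}_k(t)=\eta\sum_{\tau=1}^{t-1}\sum_{j=1}^N W^{t-\tau}_{ij}Y^{(j)}_{\tau}\mathbf 1\{A^{(j)}_\tau=k\}+1,\qquad \beta^{(i)}_k(t)=\eta\sum_{\tau=1}^{t-1}\sum_{j=1}^N W^{t-\tau}_{ij}(1-Y^{(j)}_{\tau})\mathbf 1\{A^{(j)}_\tau=k\}+1, \] and $W^{s}_{ij}$ denotes the $(i,j)$ entry of the matrix power $W^s$.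
   Context: $N$ agents on a connected undirected graph; $W\in\mathbb R^{N\times N}$ doubly stochastic with nonnegative entries, $W_{ij}>0$ for $i\ne j$ iff $\{i,j\}$ is an edge. $K$ arms with Bernoulli rewards (arm $k$ has mean $\mu_k$), independent across agents, rounds, arms. Let $p_\theta(y)=\theta^y(1-\theta)^{1-y}$ on $[0,1]$. Decentralized Thompson Sampling (learning rate $\eta$, prior density $q_0$ on $[0,1]$): agent $i$ maintains densities $q^{(i)}_{k,t}$ with $q^{(i)}_{k,1}=q_0$. In round $t$, agent $i$ draws $\theta^{(i)}_k(t)\sim q^{(i)}_{k,t}$ independently over $k$, plays $A^{(i)}_t\in\arg\max_k\theta^{(i)}_k(t)$, observes reward $Y^{(i)}_t$, forms $\tilde q^{(i)}_{k,t+1}(\theta)\propto q^{(i)}_{k,t}(\theta)p_\theta(Y^{(i)}_t)^\eta$ (normalized on $[0,1]$) for $k=A^{(i)}_t$ and $\tilde q^{(i)}_{k,t+1}=q^{(i)}_{k,t}$ otherwise, and after communication sets $q^{(i)}_{k,t+1}(\theta)=\frac{\exp(\sum_{j}W_{ij}\log\tilde q^{(j)}_{k,t+1}(\theta))}{\int_0^1\exp(\sum_jW_{ij}\log\tilde q^{(j)}_{k,t+1}(\phi))d\phi}$. *)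

From HB Require Import structures.
From mathcomp Require Import all_boot all_order all_algebra.
From mathcomp Require Import all_classical all_reals all_analysis.
Set Implicit Arguments. Unset Strict Implicit. Unset Printing Implicit Defensive.
Import Order.TTheory GRing.Theory Num.Theory.
Local Open Scope classical_set_scope.
Local Open Scope ring_scope.

Section DTS.
Variable R : realType.

Definition int01 (f : R -> R) : R := Rintegral lebesgue_measure `[0%R, 1%R] f.

Definition normalize01 (f : R -> R) : R -> R := fun th => f th / int01 f.

Definition beta_unnorm (a b : R) (th : R) : R := th `^ (a - 1) * (1 - th) `^ (b - 1).
Definition betaB (a b : R) : R := int01 (beta_unnorm a b).
Definition beta_density (a b : R) (th : R) : R := beta_unnorm a b th / betaB a b.

Definition bern_lik (th : R) (y : bool) : R := if y then th else 1 - th.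

(* A tau j : arm played by agent j in round tau (tau >= 1),
   Y tau j : reward observed by agent j in round tau.
   dts_q n i k = q^{(i)}_{k, n+1} (density used in round n+1). *)
Fixpoint dts_q (N K : nat) (W : 'M[R]_N) (eta : R)
  (A : nat -> 'I_N -> 'I_K) (Y : nat -> 'I_N -> bool) (n : nat)
  : 'I_N -> 'I_K -> R -> R :=
  match n with
  | 0 => fun _ _ => beta_density 1 1
  | m.+1 =>
    let qtilde := fun (j : 'I_N) (k : 'I_K) =>
      if A m.+1 j == k
      then normalize01 (fun th => dts_q W eta A Y m j k th
                                  * bern_lik th (Y m.+1 j) `^ eta)
      else dts_q W eta A Y m j k in
    fun i k => normalize01
      (fun th => expR (\sum_(j < N) W i j * ln (qtilde j k th)))
  end.

Definition dts_alpha (N K : nat) (W : 'M[R]_N) (eta : R)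
  (A : nat -> 'I_N -> 'I_K) (Y : nat -> 'I_N -> bool) (t : nat) (i : 'I_N) (k : 'I_K) : R :=
  eta * (\sum_(1 <= tau < t) \sum_(j < N)
           (W ^+ (t - tau)) i j * (Y tau j)%:R * (A tau j == k)%:R) + 1.
Definition dts_beta (N K : nat) (W : 'M[R]_N) (eta : R)
  (A : nat -> 'I_N -> 'I_K) (Y : nat -> 'I_N -> bool) (t : nat) (i : 'I_N) (k : 'I_K) : R :=
  eta * (\sum_(1 <= tau < t) \sum_(j < N)
           (W ^+ (t - tau)) i j * (1 - (Y tau j)%:R) * (A tau j == k)%:R) + 1.

Definition comm_edge (N : nat) (W : 'M[R]_N) : rel 'I_N :=
  fun i j => (i != j) && (0 < W i j).

End DTS.

From HB Require Import structures.
From mathcomp Require Import all_boot all_order all_algebra.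
From mathcomp Require Import all_classical all_reals all_analysis.
From mathcomp Require Import measurable_realfun ring lra.
Set Implicit Arguments.
Unset Strict Implicit.
Unset Printing Implicit Defensive.
Import Order.TTheory GRing.Theory Num.Theory.
Local Open Scope classical_set_scope.
Local Open Scope ring_scope.

(* The Beta family is closed under both operations of a round.  Tempering a
   Beta(a, b) density by the Bernoulli likelihood p_theta(y)^eta multiplies it
   by theta^(eta y) (1 - theta)^(eta (1 - y)), and a weighted geometric mean of
   Beta(a_j, b_j) densities is proportional to theta^(sum_j w_j (a_j - 1))
   (1 - theta)^(sum_j w_j (b_j - 1)).  Since normalization only rescales, the
   exponents follow the linear recursion
   alpha_i(t + 1) - 1 = sum_j W_ij (alpha_j(t) - 1 + eta Y_j [A_j = k]),
   which unrolls to the matrix-power formula.  The only analytic input is that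
   the Beta integral is finite and positive when a, b >= 1, which keeps every
   normalization well defined. *)

Lemma natb_compl_ge0 (R : numDomainType) (b : bool) : 0 <= 1 - b%:R :> R.
Proof. by rewrite subr_ge0 lern1 leq_b1. Qed.

Section BetaDensity.
Variable R : realType.
Local Notation mu := (@lebesgue_measure R).

(* The densities of the algorithm are only pinned down on ]0, 1[ (at the
   endpoints [ln 0] and [0 `^ 0] take junk values), which does not affect
   the integral. *)
Lemma int01_eq_oo (f g : R -> R) : {in `]0%R, 1%R[, f =1 g} ->
  measurable_fun (`]0%R, 1%R[ : set R) g -> int01 f = int01 g.
Proof.
move=> fg mg.
have mf : measurable_fun (`]0%R, 1%R[ : set R) f.
  by apply: eq_measurable_fun mg => x /set_mem x01; rewrite fg.
rewrite /int01 /Rintegral.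
rewrite (integral_itv_bndoo true false); last exact/measurable_EFinP.
rewrite [in RHS](integral_itv_bndoo true false); last exact/measurable_EFinP.
by congr fine; apply: eq_integral => x /set_mem x01; rewrite fg.
Qed.

Lemma measurable_beta_unnorm (a b : R) : measurable_fun setT (beta_unnorm a b).
Proof.
apply: measurable_funM; first exact: measurable_powR.
exact: measurableT_comp (measurable_powR _) (measurable_funB _ _).
Qed.

Lemma powR_le1 (x p : R) : 0 <= x <= 1 -> 0 <= p -> x `^ p <= 1.
Proof.
move=> /andP[x0 x1] p0; have [->|x_neq0] := eqVneq x 0.
  by rewrite /powR eqxx; case: (p == 0).
rewrite -(powRr0 x); apply: ger_powR => //.
by rewrite x1 andbT lt_neqAle eq_sym x_neq0.
Qed.

Lemma beta_unnorm_ge0 (a b x : R) : 0 <= beta_unnorm a b x.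
Proof. by rewrite mulr_ge0 ?powR_ge0. Qed.

Section Exponents_ge1.
Variables a b : R.
Hypotheses (a_ge1 : 1 <= a) (b_ge1 : 1 <= b).

Lemma beta_unnorm_le1 (x : R) : 0 <= x <= 1 -> beta_unnorm a b x <= 1.
Proof.
move=> /andP[x0 x1]; rewrite -[1](mulr1 1).
rewrite ler_pM ?powR_ge0// powR_le1 ?subr_ge0 ?x0 ?x1//.
by rewrite lerBlDr lerDl x0.
Qed.

Lemma integrable_beta_unnorm :
  mu.-integrable `[0%R, 1%R] (EFin \o beta_unnorm a b).
Proof.
apply: measurable_bounded_integrable => //.
- suff mu01_fin : (mu `[0%R, 1%R] < +oo)%E by exact: mu01_fin.
  by rewrite lebesgue_measure_itv/= lte01 -EFinD ltry.
- exact: measurable_funS (measurable_beta_unnorm a b).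
- rewrite /bounded_near; near=> M => x /= x01.
  have {}x01 : 0 <= x <= 1 by rewrite in_itv in x01.
  rewrite ger0_norm ?beta_unnorm_ge0//.
  apply: le_trans (beta_unnorm_le1 x01) _.
  by near: M; apply: nbhs_pinfty_ge.
Unshelve. all: end_near. Qed.

Lemma beta_unnorm_ge_mid (x : R) : 4^-1 <= x <= 3 / 4 ->
  (4^-1) `^ (a - 1) * (4^-1) `^ (b - 1) <= beta_unnorm a b x.
Proof.
move=> /andP[x_ge x_le]; apply: ler_pM; rewrite ?powR_ge0//.
  by apply: ge0_ler_powR; rewrite ?subr_ge0//= ?nnegrE//; lra.
by apply: ge0_ler_powR; rewrite ?subr_ge0//= ?nnegrE//; lra.
Qed.

Lemma betaB_gt0 : 0 < betaB a b.
Proof.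
pose c : R := (4^-1) `^ (a - 1) * (4^-1) `^ (b - 1).
have c_gt0 : 0 < c by rewrite mulr_gt0 ?powR_gt0.
have mB := measurable_beta_unnorm a b.
have int_mid : (\int[mu]_(x in `[4^-1%R, (3 / 4)%R]) c%:E = (c / 2)%:E)%E.
  rewrite integral_cst//.
  rewrite [X in (_ * X)%E](_ : _ = (2^-1)%:E); first by rewrite -EFinM.
  apply: eq_trans (lebesgue_measure_itv `[4^-1%R, (3 / 4)%R]) _.
  rewrite /= ifT; last by rewrite lte_fin; lra.
  by rewrite -EFinD; congr EFin; lra.
have mid_le : ((c / 2)%:E <= \int[mu]_(x in `[0%R, 1%R]) (beta_unnorm a b x)%:E)%E.
  rewrite -int_mid; apply: (@le_trans _ _
    (\int[mu]_(x in `[4^-1%R, (3 / 4)%R]) (beta_unnorm a b x)%:E)%E).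
  - apply: ge0_le_integral => //.
    + by move=> x _; rewrite lee_fin ltW.
    + by apply/measurable_EFinP; exact: measurable_funS mB.
    + by move=> x; rewrite /= in_itv => /beta_unnorm_ge_mid; rewrite lee_fin.
  - apply: ge0_subset_integral => //.
    + by apply/measurable_EFinP; exact: measurable_funS mB.
    + by move=> x _; rewrite lee_fin beta_unnorm_ge0.
    + by move=> x; rewrite /= !in_itv/= => /andP[? ?]; apply/andP; split; lra.
rewrite /betaB /int01 /Rintegral -lte_fin fineK; last first.
  exact: integrable_fin_num integrable_beta_unnorm.
by apply: lt_le_trans mid_le; rewrite lte_fin; lra.
Qed.

Lemma normalize01_beta (f : R -> R) (C : R) : C != 0 ->
  {in `]0%R, 1%R[, f =1 fun x => C * beta_unnorm a b x} ->
  {in `]0%R, 1%R[, normalize01 f =1 beta_density a b}.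
Proof.
move=> C_neq0 fE x x01.
rewrite /normalize01 fE// (int01_eq_oo fE); last first.
  exact: measurable_funM _ (measurable_funS _ _ (measurable_beta_unnorm a b)).
rewrite /int01 RintegralZl//; last exact: integrable_beta_unnorm.
by rewrite /beta_density /betaB /int01 invfM mulrACA mulfV// mul1r.
Qed.

End Exponents_ge1.

Lemma normalize01_tempered_bern (a b eta : R) (y : bool) (q : R -> R) :
  1 <= a -> 1 <= b -> 0 <= eta ->
  {in `]0%R, 1%R[, q =1 beta_density a b} ->
  {in `]0%R, 1%R[, normalize01 (fun x => q x * bern_lik x y `^ eta) =1
     beta_density (a + eta * y%:R) (b + eta * (1 - y%:R))}.
Proof.
move=> a_ge1 b_ge1 eta_ge0 qE.
have a'_ge1 : 1 <= a + eta * y%:R by rewrite (le_trans a_ge1)// lerDl mulr_ge0.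
have b'_ge1 : 1 <= b + eta * (1 - y%:R).
  by rewrite (le_trans b_ge1)// lerDl mulr_ge0// natb_compl_ge0.
have C_neq0 : (betaB a b)^-1 != 0 by rewrite invr_eq0 gt_eqF ?betaB_gt0.
apply: (normalize01_beta a'_ge1 b'_ge1 C_neq0).
move=> x /[dup] x01; rewrite in_itv/= => /andP[x_gt0 x_lt1].
have x'_gt0 : 0 < 1 - x by lra.
rewrite qE// /beta_density /beta_unnorm.
case: y {a'_ge1 b'_ge1} => /=; rewrite ?subrr ?subr0 ?mulr0 ?mulr1 ?addr0.
- rewrite (addrAC a) [x `^ (a - 1 + eta)]powRD ?(gt_eqF x_gt0) ?implybT//.
  by ring.
- rewrite (addrAC b) [(1 - x) `^ (b - 1 + eta)]powRD ?(gt_eqF x'_gt0) ?implybT//.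
  by ring.
Qed.

Lemma ln_beta_density (a b x : R) : 1 <= a -> 1 <= b -> x \in `]0%R, 1%R[ ->
  ln (beta_density a b x) = (a - 1) * ln x + (b - 1) * ln (1 - x) - ln (betaB a b).
Proof.
move=> a_ge1 b_ge1; rewrite in_itv/= => /andP[x_gt0 x_lt1].
have x'_gt0 : 0 < 1 - x by lra.
rewrite /beta_density /beta_unnorm ln_div ?posrE ?betaB_gt0//.
  by rewrite lnM ?ln_powR// posrE powR_gt0.
by rewrite mulr_gt0// powR_gt0.
Qed.

Lemma normalize01_geometric_pool (n : nat) (w a b : 'I_n -> R)
    (q : 'I_n -> R -> R) :
  (forall j, 0 <= w j) -> (forall j, 1 <= a j) -> (forall j, 1 <= b j) ->
  (forall j, {in `]0%R, 1%R[, q j =1 beta_density (a j) (b j)}) ->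
  {in `]0%R, 1%R[, normalize01 (fun x => expR (\sum_(j < n) w j * ln (q j x))) =1
   beta_density (\sum_(j < n) w j * (a j - 1) + 1)
                (\sum_(j < n) w j * (b j - 1) + 1)}.
Proof.
move=> w_ge0 a_ge1 b_ge1 qE.
set P := \sum_(j < n) w j * (a j - 1).
set Q := \sum_(j < n) w j * (b j - 1).
set L := \sum_(j < n) w j * ln (betaB (a j) (b j)).
have P1_ge1 : 1 <= P + 1 by rewrite lerDr sumr_ge0// => j _; rewrite mulr_ge0 ?subr_ge0.
have Q1_ge1 : 1 <= Q + 1 by rewrite lerDr sumr_ge0// => j _; rewrite mulr_ge0 ?subr_ge0.
have C_neq0 : expR (- L) != 0 by rewrite gt_eqF ?expR_gt0.
apply: (normalize01_beta P1_ge1 Q1_ge1 C_neq0).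
move=> x /[dup] x01; rewrite in_itv/= => /andP[x_gt0 x_lt1].
have x'_gt0 : 0 < 1 - x by lra.
have log_pool : \sum_(j < n) w j * ln (q j x) = P * ln x + Q * ln (1 - x) - L.
  rewrite /P /Q /L !mulr_suml -sumrN -!big_split/=; apply: eq_bigr => j _.
  by rewrite qE// ln_beta_density//; ring.
rewrite log_pool /beta_unnorm !addrK !expRD /powR (gt_eqF x_gt0) (gt_eqF x'_gt0).
by rewrite [_ * _ * expR (- L)]mulrC mulrA.
Qed.

End BetaDensity.

Section DiscountedSum.
Variables (R : realType) (N : nat) (W : 'M[R]_N).

Definition discounted_sum (g : nat -> 'I_N -> R) (t : nat) (i : 'I_N) : R :=
  \sum_(1 <= tau < t) \sum_(l < N) (W ^+ (t - tau)) i l * g tau l.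

Lemma discounted_sum_succ g m i :
  discounted_sum g m.+2 i =
  \sum_(j < N) W i j * (discounted_sum g m.+1 j + g m.+1 j).
Proof.
rewrite /discounted_sum big_nat_recr//= subSnn expr1.
under [RHS]eq_bigr do rewrite mulrDr.
rewrite big_split/=; congr (_ + _).
under [RHS]eq_bigr do rewrite big_distrr/=.
rewrite [RHS]exchange_big/= big_nat_cond [RHS]big_nat_cond.
apply: eq_bigr => tau /andP[/andP[_ tau_le] _].
rewrite subSn ?(ltnW tau_le)// exprS -mulmxE.
under eq_bigr do rewrite mxE big_distrl/=.
rewrite exchange_big/=; apply: eq_bigr => j _; rewrite big_distrr/=.
by apply: eq_bigr => l _; rewrite mulrA.
Qed.

Hypothesis W_ge0 : forall i j, 0 <= W i j.

Lemma mxpow_ge0 n i j : 0 <= (W ^+ n) i j.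
Proof.
elim: n i j => [|n IHn] i j; first by rewrite expr0 mxE ler0n.
by rewrite exprS -mulmxE mxE sumr_ge0// => l _; rewrite mulr_ge0.
Qed.

Lemma discounted_sum_ge0 g t i :
  (forall tau l, 0 <= g tau l) -> 0 <= discounted_sum g t i.
Proof.
move=> g_ge0; rewrite sumr_ge0// => tau _.
by rewrite sumr_ge0// => l _; rewrite mulr_ge0 ?mxpow_ge0.
Qed.

End DiscountedSum.

Section DecentralizedTS.
Variables (R : realType) (N K : nat) (W : 'M[R]_N) (eta : R).
Variables (A : nat -> 'I_N -> 'I_K) (Y : nat -> 'I_N -> bool).
Hypotheses (W_ge0 : forall i j, 0 <= W i j) (eta_ge0 : 0 <= eta).

(* [c] is the per-observation count: [Y] for alpha, [1 - Y] for beta. *)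
Definition dts_param (c : nat -> 'I_N -> R) (t : nat) (i : 'I_N) (k : 'I_K) : R :=
  eta * discounted_sum W (fun tau l => c tau l * (A tau l == k)%:R) t i + 1.

Lemma dts_alphaE t i k :
  dts_alpha W eta A Y t i k = dts_param (fun tau l => (Y tau l)%:R) t i k.
Proof.
congr (_ * _ + 1); apply: eq_bigr => tau _.
by apply: eq_bigr => l _; rewrite mulrA.
Qed.

Lemma dts_betaE t i k :
  dts_beta W eta A Y t i k = dts_param (fun tau l => 1 - (Y tau l)%:R) t i k.
Proof.
congr (_ * _ + 1); apply: eq_bigr => tau _.
by apply: eq_bigr => l _; rewrite mulrA.
Qed.

Lemma dts_param1 c i k : dts_param c 1 i k = 1.
Proof. by rewrite /dts_param /discounted_sum big_geq// mulr0 add0r. Qed.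

Lemma dts_param_ge1 c t i k : (forall tau l, 0 <= c tau l) -> 1 <= dts_param c t i k.
Proof.
move=> c_ge0; rewrite lerDr mulr_ge0// discounted_sum_ge0// => tau l.
by rewrite mulr_ge0.
Qed.

Lemma dts_param_succ c m i k :
  dts_param c m.+2 i k = \sum_(j < N) W i j *
    (dts_param c m.+1 j k + eta * c m.+1 j * (A m.+1 j == k)%:R - 1) + 1.
Proof.
rewrite /dts_param discounted_sum_succ mulr_sumr; congr (_ + 1).
by apply: eq_bigr => j _; ring.
Qed.

Lemma dts_q_succ m k (a b : 'I_N -> R) :
  (forall j, 1 <= a j) -> (forall j, 1 <= b j) ->
  (forall j, {in `]0%R, 1%R[, dts_q W eta A Y m j k =1 beta_density (a j) (b j)}) ->
  forall i, {in `]0%R, 1%R[, dts_q W eta A Y m.+1 i k =1 beta_density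
    (\sum_(j < N) W i j * (a j + eta * (Y m.+1 j)%:R * (A m.+1 j == k)%:R - 1) + 1)
    (\sum_(j < N) W i j * (b j + eta * (1 - (Y m.+1 j)%:R) * (A m.+1 j == k)%:R - 1) + 1)}.
Proof.
move=> a_ge1 b_ge1 qE i /=.
apply: (normalize01_geometric_pool (W_ge0 i)) => j.
- by rewrite (le_trans (a_ge1 j))// lerDl !mulr_ge0.
- by rewrite (le_trans (b_ge1 j))// lerDl !mulr_ge0 ?natb_compl_ge0.
case: (A m.+1 j == k); rewrite ?mulr1 ?mulr0 ?addr0; last exact: qE.
exact: normalize01_tempered_bern.
Qed.

End DecentralizedTS.

Theorem lemma7 (R : realType) (N K : nat) (W : 'M[R]_N) (eta : R)
  (W_nonneg : forall i j, 0 <= W i j)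
  (W_row : forall i, \sum_(j < N) W i j = 1)
  (W_col : forall j, \sum_(i < N) W i j = 1)
  (W_undirected : forall i j, (0 < W i j) = (0 < W j i))
  (W_connected : forall i j, connect (comm_edge W) i j)
  (eta_pos : 0 < eta)
  (A : nat -> 'I_N -> 'I_K) (Y : nat -> 'I_N -> bool) :
  forall (t : nat), (1 <= t)%N ->
  forall (i : 'I_N) (k : 'I_K) (th : R), th \in `]0, 1[ ->
    dts_q W eta A Y t.-1 i k th
    = beta_density (dts_alpha W eta A Y t i k) (dts_beta W eta A Y t i k) th.
Proof.
have eta_ge0 := ltW eta_pos.
case=> [t_gt0|m _].
  by exfalso; rewrite ltnn in t_gt0.
elim: m => [|m IHm] i k th th01; first by rewrite dts_alphaE dts_betaE !dts_param1.
rewrite dts_alphaE dts_betaE !dts_param_succ.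
apply: (dts_q_succ W_nonneg eta_ge0 _ _ _ _ th01) => j.
- by apply: (dts_param_ge1 A W_nonneg eta_ge0) => tau l; rewrite ler0n.
- by apply: (dts_param_ge1 A W_nonneg eta_ge0) => tau l; rewrite natb_compl_ge0.
- by move=> x x01; rewrite -dts_alphaE -dts_betaE IHm.
Qed.
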